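(* Let $P$ be a finite poset, $q$ a positive integer, and $f\in\mathrm{Inc}^q(P)$. If $\mathrm{Con}(f)=(a_1,a_2,\dots,a_q)$, then $\mathrm{Con}(\mathrm{IncPro}(f))=(a_2,\dots,a_q,a_1)$.
   Context: $\mathrm{Inc}^q(P)$ is the set of $f:P\to\{1,\dots,q\}$ with $p_1<p_2\Rightarrow f(p_1)<f(p_2)$. The binary content $\mathrm{Con}(f)=(a_1,\dots,a_q)$ has $a_i=1$ if $f(p)=i$ for some $p\in P$ and $a_i=0$ otherwise. For $1\le i\le q-1$, $\rho_i(f)(x)=i+1$ if $f(x)=i$ and changing only the value at $x$ to $i+1$ yields an element of $\mathrm{Inc}^q(P)$; $\rho_i(f)(x)=i$ if $f(x)=i+1$ and changing only the value at $x$ to $i$ yields an element of $\mathrm{Inc}^q(P)$; $\rho_i(f)(x)=f(x)$ otherwise; $\mathrm{IncPro}=\rho_{q-1}\circ\cdots\circ\rho_1$. *)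

From mathcomp Require Import all_boot all_order.
Set Implicit Arguments. Unset Strict Implicit. Unset Printing Implicit Defensive.
Import Order.TTheory.
Local Open Scope order_scope.

Definition is_inc {d : Order.disp_t} {P : finPOrderType d} (q : nat) (f : P -> nat) : bool :=
  [forall x : P, (1 <= f x)%N && (f x <= q)%N] &&
  [forall x : P, forall y : P, (x < y) ==> (f x < f y)%N].

Definition upd {d : Order.disp_t} {P : finPOrderType d} (f : P -> nat) (x : P) (v : nat) : P -> nat :=
  fun y => if y == x then v else f y.

Definition rho {d : Order.disp_t} {P : finPOrderType d} (q i : nat) (f : P -> nat) : P -> nat :=
  fun x =>
    if (f x == i) && is_inc q (upd f x i.+1) then i.+1
    else if (f x == i.+1) && is_inc q (upd f x i) then i
    else f x.

(* IncPro = rho_{q-1} o ... o rho_1 (rho_1 applied first) *)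
Definition IncPro {d : Order.disp_t} {P : finPOrderType d} (q : nat) (f : P -> nat) : P -> nat :=
  foldl (fun g i => rho q i g) f (iota 1 q.-1).

Definition Con {d : Order.disp_t} {P : finPOrderType d} (q : nat) (f : P -> nat) : seq bool :=
  [seq [exists x : P, f x == i] | i <- iota 1 q].

From mathcomp Require Import all_boot all_order zify.
Set Implicit Arguments. Unset Strict Implicit. Unset Printing Implicit Defensive.
Import Order.TTheory.
Local Open Scope order_scope.

(* A toggle rho_i only exchanges the labels i and i+1, and it exchanges their
   occurrence in the content: an element labelled i fails to move up to i+1
   only because some element above it is labelled i+1, and an element labelled
   i+1 fails to move down only because some element below it is labelled i.
   So Con (rho_i f) is Con f with entries i and i+1 swapped, and IncPro acts on
   the content by the product (1 2)(2 3)...(q-1 q) of adjacent transpositions,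
   which is the q-cycle rotating the content by one step. *)

Definition swapn (i j : nat) : nat :=
  if j == i then i.+1 else if j == i.+1 then i else j.

Definition cyclen (k j : nat) : nat :=
  if (0 < j <= k)%N then j.+1 else if j == k.+1 then 1%N else j.

Lemma cyclenS k j : cyclen k.+1 j = cyclen k (swapn k.+1 j).
Proof. by rewrite /cyclen /swapn; repeat case: ifP; lia. Qed.

Lemma map_cyclen_iota n : [seq cyclen n j | j <- iota 1 n.+1] = rot 1 (iota 1 n.+1).
Proof.
rewrite [in LHS](_ : iota 1 n.+1 = rcons (iota 1 n) n.+1); last first.
  by rewrite -cats1 -[n.+1]addn1 iotaD add1n addn1.
rewrite map_rcons {2}/cyclen ltnn eqxx /= rot1_cons.
congr rcons; rewrite (iotaDl 1 1); apply/eq_in_map => j.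
by rewrite mem_iota add1n ltnS /cyclen => ->.
Qed.

Section IncLabelings.

Variables (d : Order.disp_t) (P : finPOrderType d) (q : nat).
Implicit Types (g : P -> nat) (x y : P).

Lemma is_incP g :
  reflect ((forall x, (1 <= g x <= q)%N) /\ (forall x y, x < y -> (g x < g y)%N))
          (is_inc q g).
Proof.
apply: (iffP andP) => [[/forallP gB /forallP gS]|[gB gS]]; split => //.
- by move=> x y; have /forallP/(_ y)/implyP := gS x.
- by apply/forallP.
- by apply/forallP => x; apply/forallP => y; apply/implyP; apply: gS.
Qed.

Lemma upd_incP g x v : is_inc q g ->
  is_inc q (upd g x v) <->
  [/\ (1 <= v <= q)%N, (forall y, x < y -> (v < g y)%N) & (forall y, y < x -> (g y < v)%N)].
Proof.
move=> /is_incP [gB gS]; split.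
- move=> /is_incP [uB uS]; split.
  + by have := uB x; rewrite /upd eqxx.
  + by move=> y lt_xy; have := uS x y lt_xy; rewrite /upd eqxx (gt_eqF lt_xy).
  + by move=> y lt_yx; have := uS y x lt_yx; rewrite /upd eqxx (lt_eqF lt_yx).
- case=> vB vS1 vS2; apply/is_incP; split=> [y|y z]; rewrite /upd.
  + by case: eqP => // _; apply: gB.
  + case: eqVneq => [->|_]; case: eqVneq => [->|_]; last exact: gS.
    * by rewrite ltxx.
    * exact: vS1.
    * exact: vS2.
Qed.

Section Toggle.

Variable i : nat.
Hypothesis i_range : (0 < i < q)%N.

Lemma upd_succ_inc g x : is_inc q g -> g x = i ->
  is_inc q (upd g x i.+1) = ~~ [exists y, (x < y) && (g y == i.+1)].
Proof.
move=> g_inc gx; have /is_incP [_ gS] := g_inc.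
apply/idP/existsPn => [/(upd_incP _ _ g_inc) [_ up _] y|no_succ].
  by apply/andP => -[/up lt_y /eqP gy]; lia.
apply/(upd_incP _ _ g_inc); split=> [|y lt_xy|y lt_yx]; first lia.
- by have := gS x y lt_xy; have := no_succ y; rewrite lt_xy /=; lia.
- by have := gS y x lt_yx; lia.
Qed.

Lemma upd_pred_inc g x : is_inc q g -> g x = i.+1 ->
  is_inc q (upd g x i) = ~~ [exists y, (y < x) && (g y == i)].
Proof.
move=> g_inc gx; have /is_incP [_ gS] := g_inc.
apply/idP/existsPn => [/(upd_incP _ _ g_inc) [_ _ down] y|no_pred].
  by apply/andP => -[/down lt_y /eqP gy]; lia.
apply/(upd_incP _ _ g_inc); split=> [|y lt_xy|y lt_yx]; first lia.
- by have := gS x y lt_xy; lia.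
- by have := gS y x lt_yx; have := no_pred y; rewrite lt_yx /=; lia.
Qed.

Lemma rhoE g x : is_inc q g ->
  rho q i g x =
    if g x == i then (if [exists y, (x < y) && (g y == i.+1)] then i else i.+1)
    else if g x == i.+1 then (if [exists y, (y < x) && (g y == i)] then i.+1 else i)
    else g x.
Proof.
move=> g_inc; rewrite /rho.
case: eqP => [gx|_]; first by rewrite upd_succ_inc //= gx if_same if_neg.
by case: eqP => [gx|//]; rewrite upd_pred_inc //= gx if_neg.
Qed.

Lemma rho_moved g x : rho q i g x = g x \/
  [/\ is_inc q (upd g x (rho q i g x)), (i <= g x <= i.+1)%N & (i <= rho q i g x <= i.+1)%N].
Proof.
rewrite /rho; case: ifP => [/andP[/eqP gx up]|_]; first by right; split=> //; lia.
by case: ifP => [/andP[/eqP gx down]|_]; [right; split=> //; lia | left].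
Qed.

Lemma rho_inc g : is_inc q g -> is_inc q (rho q i g).
Proof.
move=> g_inc; have /is_incP [gB gS] := g_inc.
apply/is_incP; split=> [x|x y lt_xy].
  by case: (rho_moved g x) => [->|[/(upd_incP _ _ g_inc) []]]; first exact: gB.
have := gS x y lt_xy.
case: (rho_moved g x) => [->|[/(upd_incP _ _ g_inc) [_ /(_ y lt_xy) x_lt _] ? ?]];
case: (rho_moved g y) => [->|[/(upd_incP _ _ g_inc) [_ _ /(_ x lt_xy) y_gt] ? ?]]; lia.
Qed.

Lemma codom_rho_lo g : is_inc q g -> (i \in codom (rho q i g)) = (i.+1 \in codom g).
Proof.
move=> g_inc; apply/codomP/codomP => [[x]|[y gy]].
  rewrite rhoE //; case: ifP => [/eqP gx|/eqP gx_i].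
    by case: existsP => [[y /andP[_ /eqP gy]] _|_]; [exists y; rewrite gy | lia].
  by case: ifP => [/eqP gx _|/eqP gx_i1 /esym]; [exists x | lia].
case: (boolP [exists x, (x < y) && (g x == i)]) => [/existsP[x /andP[lt_xy /eqP gx]]|no_pred].
  exists x; rewrite rhoE // gx eqxx; case: existsP => // -[].
  by exists y; rewrite lt_xy -gy eqxx.
by exists y; rewrite rhoE // -gy (negbTE no_pred) eqxx; case: eqP => //; lia.
Qed.

Lemma codom_rho_hi g : is_inc q g -> (i.+1 \in codom (rho q i g)) = (i \in codom g).
Proof.
move=> g_inc; apply/codomP/codomP => [[x]|[x gx]].
  rewrite rhoE //; case: ifP => [/eqP gx _|/eqP gx_i]; first by exists x.
  case: ifP => [/eqP gx|/eqP gx_i1 /esym]; last lia.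
  by case: existsP => [[y /andP[_ /eqP gy]] _|_]; [exists y; rewrite gy | lia].
case: (boolP [exists y, (x < y) && (g y == i.+1)]) => [/existsP[y /andP[lt_xy /eqP gy]]|no_succ].
  exists y; rewrite rhoE // gy eqxx; case: eqP => [|_]; first lia.
  case: existsP => // -[]; by exists x; rewrite lt_xy -gx eqxx.
by exists x; rewrite rhoE // -gx (negbTE no_succ) eqxx.
Qed.

Lemma codom_rho_other g j : is_inc q g -> j != i -> j != i.+1 ->
  (j \in codom (rho q i g)) = (j \in codom g).
Proof.
move=> g_inc j_i j_i1; apply/codomP/codomP => -[x jx]; exists x; move: jx;
  by rewrite rhoE //; repeat case: ifP; lia.
Qed.

Lemma codom_rho g j : is_inc q g -> (j \in codom (rho q i g)) = (swapn i j \in codom g).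
Proof.
move=> g_inc; rewrite /swapn; case: eqVneq => [->|j_i]; first exact: codom_rho_lo.
by case: eqVneq => [->|j_i1]; [exact: codom_rho_hi | exact: codom_rho_other].
Qed.

End Toggle.

Definition rho_upto k g : P -> nat := foldl (fun h i => rho q i h) g (iota 1 k).

Lemma rho_uptoS k g : rho_upto k.+1 g = rho q k.+1 (rho_upto k g).
Proof. by rewrite /rho_upto -[k.+1]addn1 iotaD foldl_cat add1n addn1. Qed.

Lemma rho_upto_inc k g : (k < q)%N -> is_inc q g -> is_inc q (rho_upto k g).
Proof.
move=> + g_inc; elim: k => [//|k IHk] lt_kq.
by rewrite rho_uptoS; apply: rho_inc; [lia | apply: IHk; lia].
Qed.

Lemma codom_rho_upto k g j : (k < q)%N -> is_inc q g ->
  (j \in codom (rho_upto k g)) = (cyclen k j \in codom g).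
Proof.
move=> + g_inc; elim: k j => [j _|k IHk j lt_kq].
  by have -> : cyclen 0 j = j by rewrite /cyclen; repeat case: ifP; lia.
rewrite rho_uptoS codom_rho ?rho_upto_inc ?IHk ?cyclenS //; lia.
Qed.

Lemma ConE g : Con q g = [seq j \in codom g | j <- iota 1 q].
Proof.
by apply/eq_map => j; apply/existsP/codomP => [[x /eqP <-]|[x ->]]; exists x.
Qed.

End IncLabelings.

Theorem lemma3p9 (d : Order.disp_t) (P : finPOrderType d) (q : nat) (f : P -> nat) :
  (0 < q)%N -> is_inc q f ->
  Con q (IncPro q f) = rot 1 (Con q f).
Proof.
move=> q_gt0 f_inc.
have -> : IncPro q f = rho_upto q q.-1 f by [].
rewrite !ConE (eq_map (fun j => codom_rho_upto j _ f_inc)); last lia.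
by rewrite (map_comp (mem (codom f))) -(prednK q_gt0) map_cyclen_iota map_rot.
Qed.
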